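(* Let $D$ be a vertex-supported divisor on a metric graph $\Gamma$. If $C$ is an anchor cell of $|D|$ represented by a divisor $D+(f)$ with $f\in R(D)$, then $C$ is uniquely determined by the outgoing slopes of $f$ at all vertices of $\Gamma$ (along all edges incident to them).
   Context: A metric graph $\Gamma=(V,E)$ is a connected undirected graph whose edges have positive real lengths $M_e$. Divisors are finite formal $\mathbb{Z}$-combinations of points of $\Gamma$; effective means nonnegative coefficients; vertex-supported means support in $V$. A rational function is a continuous $f:\Gamma\to\mathbb{R}$, piecewise linear on each edge with finitely many pieces and integer slopes; $(f)=\sum_x\mathrm{ord}_x(f)x$ with $\mathrm{ord}_x(f)$ the sum of outgoing slopes at $x$. $R(D)=\{f:D+(f)\text{ effective}\}$, $|D|=\{D+(f):f\in R(D)\}$. Cells of $|D|$: identify each open edge $e$ with $(0,M_e)$. A cell is given by data: nonnegative integers $d_v$ ($v\in V$), ordered partitions $d_e=\sum_{i=1}^{r_e}d_e^i$ into positive integers for some edges, and integers $m_e$ ($e\in E$); $L\in|D|$ belongs to it iff $L(v)=d_v$, $L|_{e^\circ}=\sum_i d_e^ix_i$ with $0<x_1<\dots<x_{r_e}<M_e$ on edges with a partition and $L|_{e^\circ}=0$ otherwise, and every $f\in R(D)$ with $L=D+(f)$ has outgoing slope $m_e$ at $0\in e$. Elements of a cell are its representatives; a cell is determined by its data. An anchor divisor is a divisor with at most one positive interior point on each edge; an anchor cell is a cell all of whose representatives are anchor divisors. *)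

From mathcomp Require Import all_boot.
From Stdlib Require Import Reals ZArith List.

Set Implicit Arguments.
Unset Strict Implicit.
Unset Printing Implicit Defensive.

(* Each edge e is oriented from
   [src e] to [tgt e]; its interior is identified with the open interval
   (0, len e), 0 corresponding to [src e] and [len e] to [tgt e].
   Loops (src e = tgt e) and multiple edges are allowed. *)
Record mgraph := MGraph {
  mV : finType;
  mE : finType;
  src : mE -> mV;
  tgt : mE -> mV;
  len : mE -> R
}.

Definition adjacent (G : mgraph) : rel (mV G) :=
  fun u v => [exists e : mE G,
     ((src e == u) && (tgt e == v)) || ((src e == v) && (tgt e == u))].

Definition metric_graph (G : mgraph) : Prop :=
  (forall e : mE G, (0 < len e)%R) /\
  (forall u v : mV G, connect (@adjacent G) u v).

(* Points of the metric graph: vertices, or interior points (e, t) with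
   0 < t < len e.  Terms [PE e t] with t outside (0, len e) are junk and
   divisors are required to vanish on them. *)
Inductive pt (G : mgraph) :=
| PV of mV G
| PE of mE G & R.

Definition valid_pt (G : mgraph) (x : pt G) : Prop :=
  match x with
  | PV _ => True
  | PE e t => (0 < t < len e)%R
  end.

Definition divisor_on (G : mgraph) := pt G -> Z.

Definition is_divisor (G : mgraph) (D : divisor_on G) : Prop :=
  (forall x, ~ valid_pt x -> D x = 0%Z) /\
  (exists s : list (pt G), forall x, D x <> 0%Z -> In x s).

Definition effective (G : mgraph) (D : divisor_on G) : Prop :=
  forall x, valid_pt x -> (0 <= D x)%Z.

Definition vertex_supported (G : mgraph) (D : divisor_on G) : Prop :=
  forall e t, D (PE e t) = 0%Z.

(* A function on the metric graph: values at vertices and, on each edge e,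
   a function on [0, len e] (parametrised as above). *)
Record gfun (G : mgraph) := GFun {
  fV : mV G -> R;
  fE : mE G -> R -> R
}.

Definition rational_fun (G : mgraph) (f : gfun G) : Prop :=
  forall e : mE G,
    fE f e 0%R = fV f (src e) /\
    fE f e (len e) = fV f (tgt e) /\
    exists (n : nat) (bp : nat -> R) (sl : nat -> Z),
      bp 0%nat = 0%R /\ bp n = len e /\
      (forall i, (i < n)%coq_nat -> (bp i < bp (S i))%R) /\
      (forall i t, (i < n)%coq_nat -> (bp i <= t <= bp (S i))%R ->
          fE f e t = (fE f e (bp i) + IZR (sl i) * (t - bp i))%R).

Definition rslope (F : R -> R) (t : R) (m : Z) : Prop :=
  exists eps, (0 < eps)%R /\
    forall s, (0 <= s <= eps)%R -> F (t + s)%R = (F t + IZR m * s)%R.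

Definition lslope (F : R -> R) (t : R) (m : Z) : Prop :=
  exists eps, (0 < eps)%R /\
    forall s, (0 <= s <= eps)%R -> F (t - s)%R = (F t - IZR m * s)%R.

Definition out_slope0 (G : mgraph) (f : gfun G) (e : mE G) (m : Z) : Prop :=
  rslope (fE f e) 0%R m.

(* Outgoing slope of f along e at the endpoint len e (i.e. at tgt e). *)
Definition out_slope1 (G : mgraph) (f : gfun G) (e : mE G) (m : Z) : Prop :=
  lslope (fE f e) (len e) (- m)%Z.

(* ord_x(f) = k : sum of outgoing slopes of f at x. *)
Definition ord_at (G : mgraph) (f : gfun G) (x : pt G) (k : Z) : Prop :=
  match x with
  | PV v =>
      exists s0 s1 : mE G -> Z,
        (forall e, out_slope0 f e (s0 e)) /\
        (forall e, out_slope1 f e (s1 e)) /\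
        k = (\big[Z.add/0%Z]_(e : mE G | src e == v) s0 e
             + \big[Z.add/0%Z]_(e : mE G | tgt e == v) s1 e)%Z
  | PE e t =>
      if Rlt_dec 0 t then
        if Rlt_dec t (len e) then
          exists r l, rslope (fE f e) t r /\ lslope (fE f e) t l /\ k = (r - l)%Z
        else k = 0%Z
      else k = 0%Z
  end.

Definition is_sum_principal (G : mgraph) (D : divisor_on G) (f : gfun G)
    (L : divisor_on G) : Prop :=
  forall x, exists k, ord_at f x k /\ L x = (D x + k)%Z.

Definition in_linsys (G : mgraph) (D L : divisor_on G) : Prop :=
  exists f, rational_fun f /\ is_sum_principal D f L /\ effective L.

(* Cell data: d_v (vertices), ordered partition of d_e (the empty list
   meaning "no partition on e"), and m_e. *)
Record cell_data (G : mgraph) := CellData {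
  cdV : mV G -> nat;
  cdE : mE G -> list nat;
  cdM : mE G -> Z
}.

Definition in_cell (G : mgraph) (D : divisor_on G) (c : cell_data G)
    (L : divisor_on G) : Prop :=
  in_linsys D L /\
  (forall v, L (PV v) = Z.of_nat (cdV c v)) /\
  (forall e,
     Forall (fun d => (0 < d)%coq_nat) (cdE c e) /\
     exists xs : list R,
       length xs = length (cdE c e) /\
       (forall i, (i < length xs)%coq_nat ->
           (0 < nth i xs 0 < len e)%R) /\
       (forall i j, (i < j)%coq_nat -> (j < length xs)%coq_nat ->
           (nth i xs 0 < nth j xs 0)%R) /\
       (forall i, (i < length xs)%coq_nat ->
           L (PE e (nth i xs 0%R)) = Z.of_nat (nth i (cdE c e) 0%nat)) /\
       (forall t, (0 < t < len e)%R -> ~ In t xs -> L (PE e t) = 0%Z)) /\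
  (forall e f, rational_fun f -> is_sum_principal D f L ->
     out_slope0 f e (cdM c e)).

Definition anchor_divisor (G : mgraph) (L : divisor_on G) : Prop :=
  forall e t t',
    (0 < t < len e)%R -> (0 < t' < len e)%R ->
    (0 < L (PE e t))%Z -> (0 < L (PE e t'))%Z -> t = t'.

Definition anchor_cell (G : mgraph) (D : divisor_on G) (c : cell_data G) : Prop :=
  forall L, in_cell D c L -> anchor_divisor L.

(* The cell data of a representative D + (f) are read off from the outgoing
   slopes of f. At a vertex v, d_v = D(v) + ord_v(f) is the sum of these
   slopes since D is vertex-supported. On an edge, the slope changes of f
   telescope, so the total interior degree of D + (f) on e is minus the sum
   of the two outgoing slopes at the ends of e; in an anchor cell this degree
   sits at a single point (or vanishes), which determines the partition of
   d_e. Finally m_e is the outgoing slope at the start of e. *)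
From mathcomp Require Import all_boot.
From Stdlib Require Import Reals ZArith List.
From Stdlib Require Import Lra Lia FunctionalExtensionality.

Set Implicit Arguments.
Unset Strict Implicit.
Local Open Scope R_scope.

Lemma rslope_unique F t m1 m2 : rslope F t m1 -> rslope F t m2 -> m1 = m2.
Proof.
  intros [e1 [He1 H1]] [e2 [He2 H2]].
  assert (Hs : 0 < Rmin e1 e2) by (apply Rmin_glb_lt; lra).
  have A1 := H1 (Rmin e1 e2) ltac:(split; [lra | apply Rmin_l]).
  have A2 := H2 (Rmin e1 e2) ltac:(split; [lra | apply Rmin_r]).
  apply eq_IZR, (Rmult_eq_reg_r (Rmin e1 e2)); lra.
Qed.

Lemma lslope_unique F t m1 m2 : lslope F t m1 -> lslope F t m2 -> m1 = m2.
Proof.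
  intros [e1 [He1 H1]] [e2 [He2 H2]].
  assert (Hs : 0 < Rmin e1 e2) by (apply Rmin_glb_lt; lra).
  have A1 := H1 (Rmin e1 e2) ltac:(split; [lra | apply Rmin_l]).
  have A2 := H2 (Rmin e1 e2) ltac:(split; [lra | apply Rmin_r]).
  apply eq_IZR, (Rmult_eq_reg_r (Rmin e1 e2)); lra.
Qed.

Section PiecewiseLinear.
Variables (F : R -> R) (n : nat) (bp : nat -> R) (sl : nat -> Z).
Hypothesis bp_step : forall i, (i < n)%coq_nat -> bp i < bp (S i).
Hypothesis F_piece : forall i t, (i < n)%coq_nat -> bp i <= t <= bp (S i) ->
  F t = F (bp i) + IZR (sl i) * (t - bp i).

Lemma bp_le i j : (i <= j)%coq_nat -> (j <= n)%coq_nat -> bp i <= bp j.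
Proof.
  intros Hij Hjn. induction Hij as [|j Hij IH]; [lra|].
  apply Rle_trans with (bp j); [apply IH; lia | left; apply bp_step; lia].
Qed.

Lemma piece_rslope i t :
  (i < n)%coq_nat -> bp i <= t < bp (S i) -> rslope F t (sl i).
Proof.
  intros Hi Ht. exists (bp (S i) - t). split; [lra|]. intros s Hs.
  rewrite (F_piece Hi (t := t + s)); [|lra].
  rewrite (F_piece Hi (t := t)); [ring | lra].
Qed.

Lemma piece_lslope i t :
  (i < n)%coq_nat -> bp i < t <= bp (S i) -> lslope F t (sl i).
Proof.
  intros Hi Ht. exists (t - bp i). split; [lra|]. intros s Hs.
  rewrite (F_piece Hi (t := t - s)); [|lra].
  rewrite (F_piece Hi (t := t)); [ring | lra].
Qed.

End PiecewiseLinear.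

Lemma ord_interior (G : mgraph) (D : divisor_on G) f L e t :
  vertex_supported D -> is_sum_principal D f L -> 0 < t < len e ->
  exists r l, rslope (fE f e) t r /\ lslope (fE f e) t l /\
    L (PE e t) = (r - l)%Z.
Proof.
  intros HDv HL Ht. destruct (HL (PE e t)) as [k [Hk HLk]]. cbn in Hk.
  rewrite HDv in HLk.
  destruct (Rlt_dec 0 t) as [Ht0|]; [|lra].
  destruct (Rlt_dec t (len e)) as [Ht1|]; [|lra].
  destruct Hk as [r [l [Hr [Hl ->]]]]. exists r, l. auto.
Qed.

Section EdgeDegree.
Variables (G : mgraph) (D : divisor_on G) (f : gfun G) (L : divisor_on G).
Variables (e : mE G) (n : nat) (bp : nat -> R) (sl : nat -> Z).
Hypothesis HDv : vertex_supported D.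
Hypothesis HL : is_sum_principal D f L.
Hypothesis bp_first : bp 0%nat = 0.
Hypothesis bp_last : bp n = len e.
Hypothesis bp_step : forall i, (i < n)%coq_nat -> bp i < bp (S i).
Hypothesis f_piece : forall i t, (i < n)%coq_nat -> bp i <= t <= bp (S i) ->
  fE f e t = fE f e (bp i) + IZR (sl i) * (t - bp i).

Lemma ord_inside_piece i t :
  (i < n)%coq_nat -> bp i < t < bp (S i) -> L (PE e t) = 0%Z.
Proof.
  intros Hi Ht.
  assert (Hint : 0 < t < len e).
  { rewrite -bp_first -bp_last.
    have := bp_le bp_step (i := 0) (j := i) ltac:(lia) ltac:(lia).
    have := bp_le bp_step (i := S i) (j := n) ltac:(lia) ltac:(lia). lra. }
  destruct (ord_interior HDv HL Hint) as [r [l [Hr [Hl ->]]]].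
  rewrite (rslope_unique Hr (piece_rslope f_piece Hi (t := t) ltac:(lra))).
  rewrite (lslope_unique Hl (piece_lslope f_piece Hi (t := t) ltac:(lra))).
  lia.
Qed.

Lemma bp_interior i : (0 < i)%coq_nat -> (i < n)%coq_nat -> 0 < bp i < len e.
Proof.
  intros Hi0 Hin. rewrite -bp_first -bp_last.
  have := bp_le bp_step (i := 1) (j := i) ltac:(lia) ltac:(lia).
  have := bp_le bp_step (i := S i) (j := n) ltac:(lia) ltac:(lia).
  have := bp_step (i := 0) ltac:(lia). have := bp_step (i := i) ltac:(lia).
  lra.
Qed.

Lemma ord_breakpoint i :
  (S i < n)%coq_nat -> L (PE e (bp (S i))) = (sl (S i) - sl i)%Z.
Proof.
  intros Hi.
  have Hhi := bp_step (i := S i) Hi.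
  have Hii := bp_step (i := i) ltac:(lia).
  have Hint := bp_interior (i := S i) ltac:(lia) ltac:(lia).
  destruct (ord_interior HDv HL Hint) as [r [l [Hr [Hl ->]]]].
  rewrite (rslope_unique Hr (piece_rslope f_piece Hi (t := bp (S i)) ltac:(lra))).
  rewrite (lslope_unique Hl (piece_lslope f_piece (i := i) ltac:(lia)
                               (t := bp (S i)) ltac:(lra))).
  reflexivity.
Qed.

Variable x : R.
Hypothesis x_interior : 0 < x < len e.
Hypothesis L_single : forall t, 0 < t < len e -> t <> x -> L (PE e t) = 0%Z.

Lemma slope_jumps_telescope i : (i < n)%coq_nat ->
  (sl i - sl 0%nat)%Z = if Rle_dec x (bp i) then L (PE e x) else 0%Z.
Proof.
  induction i as [|i IH]; intros Hi.
  { destruct (Rle_dec x (bp 0%nat)); simpl; [lra | lia]. }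
  specialize (IH ltac:(lia)).
  have Hjump := ord_breakpoint (i := i) Hi.
  have Hii := bp_step (i := i) ltac:(lia).
  destruct (Req_dec (bp (S i)) x) as [Hx|Hx].
  - rewrite -Hx in IH |- *.
    destruct (Rle_dec (bp (S i)) (bp i)); [lra|].
    destruct (Rle_dec (bp (S i)) (bp (S i))); simpl in *; [lia | lra].
  - rewrite (L_single (bp_interior (i := S i) ltac:(lia) ltac:(lia)) Hx) in Hjump.
    destruct (Rle_dec x (bp i)), (Rle_dec x (bp (S i))); simpl in *;
      try lra; try lia.
    rewrite (ord_inside_piece (i := i) ltac:(lia) (t := x) ltac:(lra)) in IH |- *.
    lia.
Qed.

Lemma interior_degree_slopes : L (PE e x) = (sl (Nat.pred n) - sl 0%nat)%Z.
Proof.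
  assert (Hn : (0 < n)%coq_nat).
  { destruct (Nat.eq_dec n 0) as [Hn0|]; [|lia].
    have := bp_last. rewrite Hn0 bp_first. lra. }
  have Htel := slope_jumps_telescope (i := Nat.pred n) ltac:(lia).
  destruct (Rle_dec x (bp (Nat.pred n))); simpl in Htel; [lia|].
  rewrite (ord_inside_piece (i := Nat.pred n) ltac:(lia) (t := x)); [lia|].
  replace (S (Nat.pred n)) with n by lia. lra.
Qed.

End EdgeDegree.

Lemma interior_degree (G : mgraph) (D : divisor_on G) f L e x s0 s1 :
  vertex_supported D -> rational_fun f -> is_sum_principal D f L ->
  0 < x < len e -> (forall t, 0 < t < len e -> t <> x -> L (PE e t) = 0%Z) ->
  out_slope0 f e s0 -> out_slope1 f e s1 -> L (PE e x) = (- (s0 + s1))%Z.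
Proof.
  intros HDv Hf HL Hx Hsingle H0 H1.
  destruct (Hf e) as [_ [_ [n [bp [sl [Hb0 [Hbn [Hstep Hpiece]]]]]]]].
  assert (Hn : (0 < n)%coq_nat).
  { destruct n; [rewrite Hb0 in Hbn; lra | lia]. }
  assert (Hpred : S (Nat.pred n) = n) by lia.
  have Hs0 : s0 = sl 0%nat.
  { apply (rslope_unique H0), (piece_rslope Hpiece Hn).
    have := Hstep 0%nat Hn. lra. }
  have Hs1 : (- s1)%Z = sl (Nat.pred n).
  { apply (lslope_unique H1), (piece_lslope Hpiece (i := Nat.pred n) ltac:(lia)).
    have := Hstep (Nat.pred n) ltac:(lia). rewrite Hpred. lra. }
  rewrite (interior_degree_slopes HDv HL Hb0 Hbn Hstep Hpiece Hx Hsingle).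
  lia.
Qed.

Definition edge_part (T : Z) : list nat :=
  if (0 <? T)%Z then Z.to_nat T :: nil else nil.

Lemma anchor_cell_edge_part (G : mgraph) (D : divisor_on G) c L f e s0 s1 :
  0 < len e -> vertex_supported D -> rational_fun f -> is_sum_principal D f L ->
  in_cell D c L -> anchor_divisor L ->
  out_slope0 f e s0 -> out_slope1 f e s1 -> cdE c e = edge_part (- (s0 + s1)).
Proof.
  intros Hle HDv Hf HL [_ [_ [Hedge _]]] Hanchor H0 H1.
  destruct (Hedge e) as [Hpos [xs [Hlen [Hrange [Hsorted [Hval Hzero]]]]]].
  unfold edge_part.
  destruct xs as [|x0 [|x1 xs]], (cdE c e) as [|d0 [|d1 ds]];
    simpl in Hlen; try discriminate.
  - (* no marked point: the interior degree vanishes, as seen at the midpoint *)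
    have Hmid : 0 < len e / 2 < len e by lra.
    have Hnone t : 0 < t < len e -> t <> len e / 2 -> L (PE e t) = 0%Z.
    { intros Ht _. apply Hzero; [exact Ht | simpl; tauto]. }
    rewrite -(interior_degree HDv Hf HL Hmid Hnone H0 H1).
    rewrite Hzero; [reflexivity | exact Hmid | simpl; tauto].
  - have Hd0 := Forall_inv Hpos.
    have Hx0 := Hrange 0%nat ltac:(simpl; lia).
    have Hv0 := Hval 0%nat ltac:(simpl; lia). simpl in Hx0, Hv0.
    assert (Hsingle : forall t, 0 < t < len e -> t <> x0 -> L (PE e t) = 0%Z).
    { intros t Ht Hne. apply Hzero; [exact Ht | simpl; intuition]. }
    rewrite -(interior_degree HDv Hf HL Hx0 Hsingle H0 H1) Hv0.
    replace (0 <? Z.of_nat d0)%Z with true by (symmetry; apply Z.ltb_lt; lia).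
    rewrite Nat2Z.id. reflexivity.
  - exfalso.
    have Hd0 := Forall_inv Hpos. have Hd1 := Forall_inv (Forall_inv_tail Hpos).
    have Hx0 := Hrange 0%nat ltac:(simpl; lia).
    have Hx1 := Hrange 1%nat ltac:(simpl; lia).
    have Hv0 := Hval 0%nat ltac:(simpl; lia).
    have Hv1 := Hval 1%nat ltac:(simpl; lia).
    have H01 := Hsorted 0%nat 1%nat ltac:(lia) ltac:(simpl; lia).
    simpl in Hx0, Hx1, Hv0, Hv1, H01.
    have := Hanchor e x0 x1 Hx0 Hx1 ltac:(lia) ltac:(lia). lra.
Qed.

Lemma ord_vertex_unique (G : mgraph) (f1 f2 : gfun G) v k1 k2 :
  (forall e, exists m, out_slope0 f1 e m /\ out_slope0 f2 e m) ->
  (forall e, exists m, out_slope1 f1 e m /\ out_slope1 f2 e m) ->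
  ord_at f1 (PV v) k1 -> ord_at f2 (PV v) k2 -> k1 = k2.
Proof.
  intros Hsl0 Hsl1 [a0 [a1 [Ha0 [Ha1 ->]]]] [b0 [b1 [Hb0 [Hb1 ->]]]].
  f_equal; apply eq_bigr; intros e _.
  - destruct (Hsl0 e) as [m [Hm1 Hm2]].
    rewrite (rslope_unique (Ha0 e) Hm1) (rslope_unique (Hb0 e) Hm2).
    reflexivity.
  - destruct (Hsl1 e) as [m [Hm1 Hm2]].
    have := lslope_unique (Ha1 e) Hm1. have := lslope_unique (Hb1 e) Hm2. lia.
Qed.

Lemma cell_data_ext (G : mgraph) (c1 c2 : cell_data G) :
  (forall v, cdV c1 v = cdV c2 v) ->
  (forall e, cdE c1 e = cdE c2 e /\ cdM c1 e = cdM c2 e) -> c1 = c2.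
Proof.
  destruct c1 as [a1 b1 m1], c2 as [a2 b2 m2]; simpl; intros HV HE.
  f_equal; apply functional_extensionality; intro x; apply HV || apply HE.
Qed.

Theorem corollary2p16 (G : mgraph) (HG : metric_graph G)
  (D : divisor_on G) (HD : is_divisor D) (HDv : vertex_supported D)
  (c1 c2 : cell_data G) (f1 f2 : gfun G) (L1 L2 : divisor_on G) :
  rational_fun f1 -> is_sum_principal D f1 L1 -> effective L1 ->
  rational_fun f2 -> is_sum_principal D f2 L2 -> effective L2 ->
  in_cell D c1 L1 -> anchor_cell D c1 ->
  in_cell D c2 L2 -> anchor_cell D c2 ->
  (forall e, exists m, out_slope0 f1 e m /\ out_slope0 f2 e m) ->
  (forall e, exists m, out_slope1 f1 e m /\ out_slope1 f2 e m) ->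
  (forall v, cdV c1 v = cdV c2 v) /\
  (forall e, cdE c1 e = cdE c2 e /\ cdM c1 e = cdM c2 e) /\
  (forall L, in_cell D c1 L <-> in_cell D c2 L).
Proof.
  intros Hf1 HL1 _ Hf2 HL2 _ Hc1 Ha1 Hc2 Ha2 Hsl0 Hsl1.
  have HV : forall v, cdV c1 v = cdV c2 v.
  { intro v. apply Nat2Z.inj.
    rewrite -(proj1 (proj2 Hc1) v) -(proj1 (proj2 Hc2) v).
    destruct (HL1 (PV v)) as [k1 [Hk1 ->]], (HL2 (PV v)) as [k2 [Hk2 ->]].
    rewrite (ord_vertex_unique Hsl0 Hsl1 Hk1 Hk2). reflexivity. }
  have HE : forall e, cdE c1 e = cdE c2 e /\ cdM c1 e = cdM c2 e.
  { intro e. destruct (Hsl0 e) as [m0 [H01 H02]], (Hsl1 e) as [m1 [H11 H12]].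
    split.
    - rewrite (anchor_cell_edge_part (proj1 HG e) HDv Hf1 HL1 Hc1 (Ha1 L1 Hc1) H01 H11).
      rewrite (anchor_cell_edge_part (proj1 HG e) HDv Hf2 HL2 Hc2 (Ha2 L2 Hc2) H02 H12).
      reflexivity.
    - rewrite (rslope_unique (proj2 (proj2 (proj2 Hc1)) e f1 Hf1 HL1) H01).
      rewrite (rslope_unique (proj2 (proj2 (proj2 Hc2)) e f2 Hf2 HL2) H02).
      reflexivity. }
  split; [exact HV | split; [exact HE |]].
  rewrite (cell_data_ext HV HE). tauto.
Qed.
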